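(* Let $p,q$ be nonnegative integers and let $x,z$ be arbitrary complex numbers. Then $$\binom{2x+z-q}{p}\binom{x}{q}=\sum_{i=0}^{p+q}\beta_i(p,q,z)\binom{2x+z}{i},$$ where $$\beta_i(p,q,z)=\frac{1}{2^{2q}}\sum_{b=\max(0,i-p)}^{q}2^b\binom{2q-b}{q}\sum_{a=0}^{b}\binom{p+b-q-z}{a}\binom{q+z}{b-a}\binom{a-q}{p+b-i}.$$
   Context: For complex $y$ and integer $n\ge0$, $\binom{y}{n}=y(y-1)\cdots(y-n+1)/n!$. *)

From HB Require Import structures.
From mathcomp Require Import all_boot all_order all_algebra.
From mathcomp Require Import complex.
From mathcomp Require Import Rstruct.
From Stdlib Require Import Rdefinitions.
Set Implicit Arguments. Unset Strict Implicit. Unset Printing Implicit Defensive.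
Import Order.TTheory GRing.Theory Num.Theory.
Local Open Scope ring_scope.

Notation CC := (complex Rdefinitions.R).

Definition binomC (F : fieldType) (y : F) (n : nat) : F :=
  (\prod_(k < n) (y - k%:R)) / (n`!)%:R.

Definition beta (i p q : nat) (z : CC) : CC :=
  ((2%:R ^+ (2 * q))^-1) *
  \sum_(maxn 0 (i - p) <= b < q.+1)
     (2%:R ^+ b * binomC ((2 * q)%:R - b%:R) q *
      \sum_(0 <= a < b.+1)
        (binomC (p%:R + b%:R - q%:R - z) a * binomC (q%:R + z) (b - a)
         * binomC (a%:R - q%:R) (p + b - i))).

From mathcomp Require Import all_boot all_order all_algebra.
From mathcomp Require Import complex Rstruct.
From mathcomp Require Import ring zify.
Import GRing.Theory Num.Theory.
Local Open Scope ring_scope.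

(* Expanding [binom(2x+z, i)] against [binom(a-q, p+b-i)] by Vandermonde
   collapses the sum over [i] to [binom(2x+z-q+a, p+b)]; since the upper
   arguments [p+b-q-z] and [q+z] of the sum over [a] add up to [p+b], a second
   convolution turns the summand of index [b] into
   [binom(2x+z-q, p) binom(2x-2q+b, b)].  What remains is
   [sum_b 2^b binom(2q-b, q) binom(2x-2q+b, b) = 4^q binom(x, q)], proved by
   induction on [q] through absorption. *)

Lemma exchange_big_nat_subn (R : nmodType) p q (F : nat -> nat -> R) :
  \sum_(0 <= i < (p + q).+1) \sum_(i - p <= b < q.+1) F i b =
  \sum_(0 <= b < q.+1) \sum_(0 <= i < (p + b).+1) F i b.
Proof.
under eq_big_nat => i _ do rewrite (big_nat_widenl _ 0) // big_mkcond.
rewrite exchange_big_nat; apply: eq_big_nat => b /andP[_ le_bq] /=.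
rewrite [RHS](big_nat_widen _ _ (p + q).+1) ?ltnS ?leq_add2l // [RHS]big_mkcond.
by apply: eq_big_nat => i _; rewrite leq_subLR.
Qed.

Lemma mulSn_bin_doubleS q b : (b <= q.+1)%N ->
  (q.+1 * 'C(q.+1.*2 - b, q.+1) =
   2 * (q.*2.+1 - b) * 'C(q.*2 - b, q) + b * 'C(q.*2.+1 - b, q))%N.
Proof.
move=> le_bq; set n := (q.*2.+1 - b)%N.
have -> : (q.+1.*2 - b = n.+1)%N by rewrite /n -subSn // -addnn; lia.
have -> : (q.*2 - b = n.-1)%N by rewrite /n subSKn.
rewrite -mul_bin_diag /= -mulnA mul_bin_down mulnA -mulnDl.
by congr (_ * _)%N; rewrite /n -addnn in le_bq *; lia.
Qed.

Section GeneralizedBinomial.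

Variable F : fieldType.
Hypothesis F_char0 : has_pchar0 F.
Implicit Types (A B u v y z m : F).

Lemma natf_eq0 n : (n%:R == 0 :> F) = (n == 0)%N.
Proof. exact: (pcharf0P F).1 F_char0 n. Qed.

Lemma natfS_neq0 n : n.+1%:R != 0 :> F.
Proof. by rewrite natf_eq0. Qed.

Lemma factf_neq0 n : n`!%:R != 0 :> F.
Proof. by rewrite natf_eq0 -lt0n fact_gt0. Qed.

Lemma binomC0 y : binomC y 0 = 1.
Proof. by rewrite /binomC big_ord0 fact0 divr1. Qed.

Lemma binomCS y n : binomC y n.+1 = binomC y n * (y - n%:R) / n.+1%:R.
Proof.
rewrite /binomC big_ord_recr /= factS natrM invfM.
by field; rewrite nat1r natfS_neq0 factf_neq0.
Qed.

Lemma binomC_absorb y n : n.+1%:R * binomC y n.+1 = y * binomC (y - 1) n.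
Proof.
rewrite /binomC big_ord_recl /= subr0 factS natrM invfM.
under eq_bigr => i _ do rewrite /bump /= add1n -natr1 opprD addrA addrAC.
by field; rewrite nat1r natfS_neq0 factf_neq0.
Qed.

Lemma binomC_nat n k : binomC (n%:R : F) k = 'C(n, k)%:R.
Proof.
elim: k => [|k IHk]; first by rewrite binomC0 bin0.
apply: (mulIf (natfS_neq0 k)); rewrite binomCS IHk mulfVK ?natfS_neq0 //.
rewrite -natrM mulnC mul_bin_left; have [le_kn|lt_nk] := leqP k n.
  by rewrite natrM natrB // mulrC.
by rewrite bin_small // muln0 mul0r.
Qed.

Lemma binomC_trinomial y p r :
  binomC y (p + r) * 'C(p + r, p)%:R = binomC y p * binomC (y - p%:R) r.
Proof.
rewrite /binomC big_split_ord /=.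
under [X in _ * X * _ * _]eq_bigr => i _ do rewrite natrD opprD addrA.
rewrite -(bin_fact (leq_addr r p)) addKn !natrM.
have Cpr_neq0 : 'C(p + r, p)%:R != 0 :> F by rewrite natf_eq0 -lt0n bin_gt0 leq_addr.
by field; rewrite Cpr_neq0 !factf_neq0.
Qed.

Lemma binomCD u v n :
  binomC (u + v) n = \sum_(0 <= i < n.+1) binomC u i * binomC v (n - i).
Proof.
elim: n u v => [|n IHn] u v; first by rewrite big_nat1 !binomC0 mulr1.
apply: (mulfI (natfS_neq0 n)); rewrite binomC_absorb mulr_sumr.
have split_weight i : (0 <= i < n.+2)%N ->
    n.+1%:R * (binomC u i * binomC v (n.+1 - i)) =
    i%:R * binomC u i * binomC v (n.+1 - i) +
    binomC u i * ((n.+1 - i)%:R * binomC v (n.+1 - i)).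
  move=> /andP[_ le_in].
  by rewrite -{1}(subnKC (le_in : (i <= n.+1)%N)) natrD; ring.
rewrite (eq_big_nat _ _ split_weight) big_split /=.
rewrite big_nat_recl // mul0r mul0r add0r.
rewrite [X in _ = _ + X]big_nat_recr //= subnn mul0r mulr0 addr0.
under eq_big_nat => i _ do rewrite binomC_absorb subSS -mulrA.
under [X in _ = _ + X]eq_big_nat => i /andP[_ le_in] do
  rewrite (subSn (le_in : (i <= n)%N)) binomC_absorb mulrCA.
by rewrite -!mulr_sumr -!IHn [u - 1 + v]addrAC addrA -mulrDl.
Qed.

Lemma binomC_convolution_bin A B b j : (j <= b)%N ->
  \sum_(0 <= a < b.+1) binomC A a * binomC B (b - a) * 'C(a, j)%:R =
  binomC A j * binomC (A - j%:R + B) (b - j).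
Proof.
move=> le_jb; rewrite (@big_cat_nat _ _ _ j) ?leqW //= big1_seq ?add0r; last first.
  move=> a /andP[_]; rewrite mem_index_iota => /andP[_ lt_aj].
  by rewrite bin_small ?mulr0.
rewrite -{1}[j]add0n big_addn (subSn le_jb) binomCD mulr_sumr.
apply: eq_big_nat => a _.
by rewrite addnC mulrAC binomC_trinomial subnDA mulrA.
Qed.

Lemma binomC_convolution_binomC A B y p b : A + B = (p + b)%:R ->
  \sum_(0 <= a < b.+1) binomC A a * binomC B (b - a) * binomC (y + a%:R) (p + b) =
  binomC y p * binomC (y - p%:R + A) b.
Proof.
move=> sumAB.
under eq_big_nat => a _ do rewrite addrC binomCD mulr_sumr.
rewrite exchange_big_nat (@big_cat_nat _ _ _ b.+1) ?ltnS ?leq_addl //=.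
rewrite [X in _ + X]big1_seq ?addr0; last first.
  move=> j /andP[_]; rewrite mem_index_iota => /andP[lt_bj _].
  apply: big1_seq => a /andP[_]; rewrite mem_index_iota => /andP[_ le_ab].
  by rewrite binomC_nat bin_small ?mul0r ?mulr0 // (leq_trans le_ab).
rewrite addrC binomCD mulr_sumr; apply: eq_big_nat => j /andP[_ le_jb].
under eq_big_nat => a _ do rewrite binomC_nat mulrA.
have le_j_pb : (j <= p + b)%N by lia.
rewrite -mulr_suml binomC_convolution_bin // addrAC sumAB -natrB //.
rewrite binomC_nat -addnBA // -bin_sub ?leq_addl // addnK.
by rewrite mulrAC -mulrA binomC_trinomial mulrCA.
Qed.

Lemma sum_beta_summand y z p q b :
  \sum_(0 <= i < (p + b).+1)
     (\sum_(0 <= a < b.+1) binomC (p%:R + b%:R - q%:R - z) a *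
        binomC (q%:R + z) (b - a) * binomC (a%:R - q%:R) (p + b - i)) * binomC y i =
  binomC (y - q%:R) p * binomC (y - z - q.*2%:R + b%:R) b.
Proof.
have sumAB : p%:R + b%:R - q%:R - z + (q%:R + z) = (p + b)%:R by rewrite natrD; ring.
under eq_big_nat => i _ do rewrite mulr_suml.
rewrite exchange_big_nat /=; transitivity (\sum_(0 <= a < b.+1)
  binomC (p%:R + b%:R - q%:R - z) a * binomC (q%:R + z) (b - a) *
  binomC (y - q%:R + a%:R) (p + b)).
  apply: eq_big_nat => a _; rewrite [y - _ + _]addrAC -[y + _ - _]addrA.
  rewrite [binomC (y + _) _]binomCD mulr_sumr.
  by apply: eq_big_nat => i _; rewrite mulrAC -mulrA.
rewrite binomC_convolution_binomC //; congr (_ * binomC _ _).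
by rewrite -addnn natrD; ring.
Qed.

Definition central_sum q m : F :=
  \sum_(0 <= b < q.+1) (2 ^ b * 'C(q.*2 - b, q))%:R * binomC (m + b%:R) b.

Lemma central_sumS q m :
  q.+1%:R * central_sum q.+1 m = 2%:R * (m + q.+1.*2%:R) * central_sum q m.
Proof.
pose B b := binomC (m + b%:R) b.
pose T1 b := (2 ^ b.+1 * (q.*2.+1 - b) * 'C(q.*2 - b, q))%:R * B b.
pose T2 b := (2 ^ b * b * 'C(q.*2.+1 - b, q))%:R * B b.
have split_term b : (0 <= b < q.+2)%N ->
    q.+1%:R * ((2 ^ b * 'C(q.+1.*2 - b, q.+1))%:R * B b) = T1 b + T2 b.
  move=> /andP[_ le_bq]; rewrite mulrA -natrM mulnCA mulSn_bin_doubleS //.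
  by rewrite mulnDr !mulnA -expnSr natrD mulrDl.
have T1_last : T1 q.+1 = 0.
  rewrite /T1; case: q {split_term T1 T2} => [|q]; first by rewrite muln0 mul0r.
  by rewrite bin_small ?muln0 ?mul0r // -addnn; lia.
have T2_first : T2 0%N = 0 by rewrite /T2 muln0 mul0r.
rewrite /central_sum mulr_sumr (eq_big_nat _ _ split_term) big_split /=.
rewrite big_nat_recr //= T1_last addr0.
rewrite [\sum_(0 <= b < q.+2) T2 b]big_nat_recl // T2_first add0r.
rewrite -big_split mulr_sumr; apply: eq_big_nat => b /andP[_ le_bq] /=.
have absorbS : b.+1%:R * B b.+1 = (m + b%:R + 1) * B b.
  by rewrite /B binomC_absorb -natr1 addrA addrK.
have -> : T2 b.+1 = (2 ^ b.+1 * 'C(q.*2 - b, q))%:R * (b.+1%:R * B b.+1).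
  by rewrite /T2 subSS !natrM; ring.
rewrite absorbS /T1 /B !natrM natrB; last by rewrite -addnn; lia.
by rewrite doubleS -addn2 !natrD expnS natrM; ring.
Qed.

Lemma central_sum_binomC q x :
  central_sum q (2%:R * x - q.*2%:R) = 2%:R ^+ (2 * q) * binomC x q.
Proof.
elim: q x => [|q IHq] x; first by rewrite /central_sum big_nat1 !binomC0.
apply: (mulfI (natfS_neq0 q)); rewrite central_sumS subrK [RHS]mulrCA binomC_absorb.
have -> : 2%:R * x - q.+1.*2%:R = 2%:R * (x - 1) - q.*2%:R.
  by rewrite doubleS -addn2 natrD; ring.
by rewrite IHq mulnS !exprD; ring.
Qed.

End GeneralizedBinomial.

Theorem lemma2p5 (p q : nat) (x z : CC) :
  binomC (2%:R * x + z - q%:R) p * binomC x q =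
  \sum_(0 <= i < (p + q).+1) beta i p q z * binomC (2%:R * x + z) i.
Proof.
have CC_char0 : has_pchar0 CC := pchar_num _.
have weight_nat b : (b <= q)%N ->
    2%:R ^+ b * binomC ((2 * q)%:R - b%:R) q = (2 ^ b * 'C(q.*2 - b, q))%:R :> CC.
  by move=> le_bq; rewrite [RHS]natrM natrX -binomC_nat // natrB ?mul2n //; lia.
rewrite /beta; under eq_big_nat => i _ do rewrite max0n -mulrA mulr_suml.
rewrite -mulr_sumr exchange_big_nat_subn.
under eq_big_nat => b /andP[_ le_bq].
  rewrite weight_nat //; under eq_big_nat => i _ do rewrite -mulrA.
  rewrite -mulr_sumr sum_beta_summand // mulrCA.
  over.
rewrite -mulr_sumr addrK -/(central_sum _ q (2%:R * x - q.*2%:R)).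
rewrite central_sum_binomC // [RHS]mulrCA mulKf //.
by rewrite expf_neq0 // pnatr_eq0.
Qed.
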